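(* Let $d,r:\mathbb{N}\to\mathbb{N}$ be functions such that $d$ is nondecreasing, takes only prime values at least $5$, $r$ is strictly increasing, and $3r(n)\le d(n)$ for all $n$. Let $\alpha_n=(1\;2\;\cdots\;d(n))$, $\beta_n=(1\;(1+r(n))\;(1+2r(n)))\in\mathrm{Alt}(d(n))$, $\alpha=(\alpha_n)_n$, $\beta=(\beta_n)_n\in\prod_n\mathrm{Alt}(d(n))$, and $G=\langle\alpha,\beta\rangle$. Let $L_\infty$ be the normal closure of $\beta$ in $G$. Then there is a surjective homomorphism $\tau:G\to W$ with $\tau(\alpha)=a$, $\tau(\beta)=b_0$; its kernel is $\ker\tau=\bigoplus_n\mathrm{Alt}(d(n))\le\prod_n\mathrm{Alt}(d(n))$ (in particular $\bigoplus_n\mathrm{Alt}(d(n))\le G$), and $\ker\tau\le L_\infty$.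
   Context: $\mathbb{N}=\{1,2,\dots\}$. $W=C_3\wr\mathbb{Z}=\bigoplus_{\mathbb{Z}}C_3\rtimes\mathbb{Z}$ (the lamplighter group), where $\mathbb{Z}=\langle a\rangle$ acts by shifting coordinates; $b_n$ generates the copy of $C_3$ at coordinate $n$, so $a^nb_ma^{-n}=b_{m+n}$. $\bigoplus_n\mathrm{Alt}(d(n))$ denotes the subgroup of the direct product consisting of elements with finitely many nontrivial coordinates. *)

From HB Require Import structures.
From mathcomp Require Import all_boot all_order all_algebra all_fingroup all_solvable alt.
Set Implicit Arguments. Unset Strict Implicit. Unset Printing Implicit Defensive.
Import GRing.Theory.

(* Index convention: the paper's index set is N = {1,2,...}; we index by
   nat = {0,1,...}, coordinate k standing for the paper's n = k+1.
   Points {1,...,d} of Alt(d) are represented by 'I_d = {0,...,d-1}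
   (point p is the ordinal p-1). *)

Definition Pt (d : nat -> nat) := forall n : nat, {perm 'I_(d n)}.
Definition Pmul (d : nat -> nat) (x y : Pt d) : Pt d := fun n => (x n * y n)%g.
Definition Pinv (d : nat -> nat) (x : Pt d) : Pt d := fun n => ((x n)^-1)%g.
Definition P1 (d : nat -> nat) : Pt d := fun n => 1%g.

Definition is_subgroup (d : nat -> nat) (S : Pt d -> Prop) : Prop :=
  [/\ S (P1 d), (forall x y, S x -> S y -> S (Pmul x y)) &
      (forall x, S x -> S (Pinv x))].

Definition gen (d : nat -> nat) (S0 : Pt d -> Prop) (x : Pt d) : Prop :=
  forall H : Pt d -> Prop, is_subgroup H -> (forall y, S0 y -> H y) -> H x.

Definition in_dsumAlt (d : nat -> nat) (x : Pt d) : Prop :=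
  (forall n, x n \in ('Alt_('I_(d n)))%g) /\
  (exists N : nat, forall n, N <= n -> x n = 1%g).

Definition cycle_perm (m : nat) : {perm 'I_m} := perm (@ordS_inj m).

(* the 3-cycle (a b c) on points given as 0-based nats (a |-> b |-> c |-> a);
   identity if some point is out of range (never the case below).
   In MathComp (s * t) x = t (s x). *)
Definition cyc3 (m a b c : nat) : {perm 'I_m} :=
  match (insub a : option 'I_m), (insub b : option 'I_m), (insub c : option 'I_m) with
  | Some a', Some b', Some c' => (tperm a' b' * tperm a' c')%g
  | _, _, _ => 1%g
  end.

Definition alpha (d : nat -> nat) : Pt d := fun n => cycle_perm (d n).
Definition beta (d r : nat -> nat) : Pt d :=
  fun n => cyc3 (d n) 0 (r n) (2 * r n).

Arguments alpha : clear implicits.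
Arguments beta : clear implicits.

Definition Ggen (d r : nat -> nat) : Pt d -> Prop :=
  gen (fun y => y = alpha d \/ y = beta d r).

Arguments Ggen : clear implicits.

Definition Linf (d r : nat -> nat) : Pt d -> Prop :=
  gen (fun y => exists g, Ggen d r g /\ y = Pmul (Pmul g (beta d r)) (Pinv g)).

Arguments Linf : clear implicits.

(* Lamplighter group W = C_3 wr Z.  An element (f, k) stands for
   (prod_i b_i^(f i)) a^k, with f finitely supported.  Using
   a^k b_m a^-k = b_(m+k), the product is
   (f, k)(g, l) = (i |-> f i + g (i - k), k + l). *)
Definition Wt := ((int -> 'Z_3) * int)%type.
Definition in_W (w : Wt) : Prop :=
  exists N : nat, forall i : int, (N < `|i|)%N -> w.1 i = 0%R.
Definition Wmul (x y : Wt) : Wt :=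
  (fun i => (x.1 i + y.1 (i - x.2)%R)%R, (x.2 + y.2)%R).
Definition W1 : Wt := (fun _ => 0%R, 0%R).
Definition Wa : Wt := (fun _ => 0%R, 1%R).
Definition Wb0 : Wt := (fun i => if i == 0%R then 1%R else 0%R, 0%R).

(* Write [b_j] for the point [j * r n] of coordinate [n], so that [beta = (b_0 b_1 b_2)], and
   call the triple [i + b_0, i + b_1, i + b_2] block [i].  At a large coordinate [n], a
   lamplighter element [(f, k)] is realised by rotating block [- i] by [f i] for every small
   [|i|] and then shifting everything by [k]: the conjugate of beta by [alpha ^ i] rotates
   block [- i].  The resulting map [phi : W -> prod Sym(d n)] is multiplicative and injective
   up to finitely many coordinates, and every element of [G] agrees with [phi w], for a unique
   [w], at all large coordinates.  Sending [x] to this [w] defines [tau]; its kernel consists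
   of the eventually trivial elements of [G], which lies in [prod Alt(d n)].
   Conversely, as [r] is strictly increasing, the commutator of beta with its conjugate by
   [alpha ^ r n] is trivial beyond coordinate [n] and nontrivial at [n].  By induction on [n],
   the elements of [L_infty] supported at coordinate [n] thus form a nontrivial subgroup of
   [Alt(d n)] normalised by [<alpha_n, beta_n>], which contains [Alt(d n)] because [d n] is
   prime; by simplicity of [Alt(d n)] that subgroup is all of [Alt(d n)]. *)

From Stdlib Require Import ClassicalEpsilon.
From HB Require Import structures.
From mathcomp Require Import all_boot all_order all_algebra all_fingroup all_solvable alt.
From mathcomp Require Import boolp zify ring.
Set Implicit Arguments. Unset Strict Implicit. Unset Printing Implicit Defensive.
Import GRing.Theory Num.Theory.

Definition to_perm {T : finType} (F : T -> T) : {perm T} :=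
  if injectiveP F is ReflectT F_inj then perm F_inj else 1%g.

Lemma to_permE (T : finType) (F : T -> T) : injective F -> to_perm F =1 F.
Proof.
rewrite /to_perm => F_inj x; case: injectiveP => [F_inj'|[]//].
by rewrite permE.
Qed.

Lemma odd_permX (T : finType) (s : {perm T}) n :
  odd_perm (s ^+ n)%g = odd n && odd_perm s.
Proof.
elim: n => [|n IH]; first by rewrite expg0 odd_perm1.
by rewrite expgS odd_permM IH /=; case: (odd n); case: (odd_perm s).
Qed.

Lemma iter_ordS m (p : 'I_m) k : (iter k (@ordS m) p : nat) = ((p + k) %% m)%N.
Proof.
have m_gt0 : (0 < m)%N by case: p => /= i; case: m.
elim: k => [|k IH] /=; first by rewrite addn0 modn_small.
by rewrite IH -[(((p + k) %% m).+1)%N]addn1 modnDml addn1 addnS.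
Qed.

Lemma mul_coprime_mod_inj (D R t t' : nat) : coprime R D -> (t < D)%N -> (t' < D)%N ->
  (t * R = t' * R %[mod D])%N -> t = t'.
Proof.
move=> coRD ht ht'; wlog le_tt' : t t' ht ht' / (t <= t')%N => [W|E].
  by case: (leqP t t') => h E; [exact: W | apply/esym/W => //; apply: ltnW].
have coDR : coprime D R by rewrite coprime_sym.
have : (D %| t' - t)%N by rewrite -(Gauss_dvdl _ coDR) mulnBl -eqn_mod_dvd ?leq_mul // E.
by case: (posnP (t' - t)) => [|pos /(dvdn_leq pos)]; lia.
Qed.

Section ThreeCycles.
Variable X : finType.
Local Open Scope group_scope.

Definition three_cycle (a b c : X) : {perm X} := tperm a b * tperm a c.

Definition distinct3 (a b c : X) := [&& a != b, a != c & b != c].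

Lemma three_cycleE a b c p : distinct3 a b c ->
  three_cycle a b c p =
    if p == a then b else if p == b then c else if p == c then a else p.
Proof.
case/and3P => ab ac bc; rewrite permM.
case: (p =P a) => [->|pa]; first by rewrite tpermL tpermD // eq_sym.
case: (p =P b) => [->|pb]; first by rewrite tpermR tpermL.
case: (p =P c) => [->|pc]; first by rewrite (tpermD ac bc) tpermR.
by rewrite !tpermD // eq_sym; apply/eqP.
Qed.

Lemma three_cycleJ a b c g : three_cycle a b c ^ g = three_cycle (g a) (g b) (g c).
Proof. by rewrite /three_cycle conjMg !tpermJ. Qed.

Lemma three_cycleV a b c : (three_cycle a b c)^-1 = three_cycle a c b.
Proof. by rewrite /three_cycle invMg !tpermV. Qed.

Lemma distinct3_rot a b c : distinct3 a b c -> distinct3 b c a.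
Proof. by case/and3P => ab ac bc; rewrite /distinct3 bc eq_sym ab eq_sym ac. Qed.

Lemma distinct3_perm a b c (g : {perm X}) :
  distinct3 a b c -> distinct3 (g a) (g b) (g c).
Proof. by rewrite /distinct3 !(inj_eq perm_inj). Qed.

Section Points.
Variables a b c : X.
Hypothesis abc : distinct3 a b c.

Lemma three_cycle1 : three_cycle a b c a = b.
Proof. by rewrite three_cycleE // eqxx. Qed.

Lemma three_cycle2 : three_cycle a b c b = c.
Proof. by case/and3P: abc => ab _ _; rewrite three_cycleE // eq_sym (negbTE ab) eqxx. Qed.

Lemma three_cycle3 : three_cycle a b c c = a.
Proof.
case/and3P: abc => _ ac bc.
by rewrite three_cycleE // eq_sym (negbTE ac) eq_sym (negbTE bc) eqxx.
Qed.

Lemma three_cycle_id p : p != a -> p != b -> p != c -> three_cycle a b c p = p.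
Proof. by move=> pa pb pc; rewrite three_cycleE // (negbTE pa) (negbTE pb) (negbTE pc). Qed.

Lemma three_cycle_rot : three_cycle a b c = three_cycle b c a.
Proof.
have bca := distinct3_rot abc; case/and3P: (abc) => ab ac bc.
apply/permP => p; rewrite !three_cycleE //.
by do ![case: eqP => // ?; subst]; move: ab ac bc; rewrite ?eqxx.
Qed.

Lemma three_cycle_Alt : three_cycle a b c \in 'Alt_X.
Proof. by case/and3P: abc => ab ac _; rewrite Alt_even odd_permM !odd_tperm ab ac. Qed.

Lemma three_cycle_neq1 : three_cycle a b c != 1.
Proof.
apply/eqP => E; have := three_cycle1; rewrite E perm1 => ab.
by case/and3P: abc; rewrite ab eqxx.
Qed.

Lemma three_cycle_on : perm_on [set a; b; c] (three_cycle a b c).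
Proof.
apply/subsetP => p; rewrite !inE; apply: contraR.
by rewrite !negb_or => /andP [/andP [pa pb] pc]; rewrite three_cycle_id.
Qed.

End Points.

Lemma three_cycle_at (a b c z : X) : distinct3 a b c -> z \in [:: a; b; c] ->
  exists b' c', distinct3 z b' c' /\ three_cycle a b c = three_cycle z b' c'.
Proof.
move=> abc; have bca := distinct3_rot abc; have cab := distinct3_rot bca.
rewrite !inE => /or3P [] /eqP ->; first by exists b, c.
  by exists c, a; rewrite three_cycle_rot.
by exists a, b; rewrite three_cycle_rot // three_cycle_rot.
Qed.

End ThreeCycles.

Section ThreeCycleGeneration.
Variables (X : finType) (T : {group {perm X}}).
Local Open Scope group_scope.

Section Through.
Variables x y : X.
Hypotheses (xy : x != y) (Txy : forall z, distinct3 x y z -> three_cycle x y z \in T).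

Lemma three_cycle_from_y_avoiding_x b c :
  distinct3 y b c -> b != x -> c != x -> three_cycle y b c \in T.
Proof.
case/and3P=> yb yc bc bx cx.
have xyb : distinct3 x y b by rewrite /distinct3 xy eq_sym bx yb.
have -> : three_cycle y b c = three_cycle x y c ^ three_cycle x y b.
  by rewrite three_cycleJ three_cycle1 // three_cycle2 // three_cycle_id // eq_sym.
by rewrite groupJ ?Txy // /distinct3 xy eq_sym cx yc.
Qed.

Lemma three_cycle_from_x_avoiding_y b c :
  distinct3 x b c -> b != y -> c != y -> three_cycle x b c \in T.
Proof.
case/and3P=> xb xc bc by_ cy.
have xyc : distinct3 x y c by rewrite /distinct3 xy xc eq_sym cy.
have ycb : distinct3 y c b by rewrite /distinct3 eq_sym cy eq_sym by_ eq_sym bc.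
have -> : three_cycle x b c = three_cycle y c b ^ three_cycle x y c.
  have bx : b != x by rewrite eq_sym.
  rewrite three_cycleJ three_cycle2 // three_cycle3 // three_cycle_id //.
  by rewrite [RHS]three_cycle_rot // /distinct3 eq_sym xc eq_sym bc xb.
by rewrite groupJ ?Txy ?three_cycle_from_y_avoiding_x ?(eq_sym c) ?(eq_sym b).
Qed.

Lemma three_cycle_from_x b c : distinct3 x b c -> three_cycle x b c \in T.
Proof.
move=> xbc; case/and3P: (xbc) => xb xc bc.
case: (b =P y) => [E|/eqP by_]; first by subst b; apply: Txy.
case: (c =P y) => [E|/eqP cy]; last exact: three_cycle_from_x_avoiding_y.
by subst c; rewrite -three_cycleV groupV Txy // /distinct3 xy xb eq_sym.
Qed.

Lemma three_cycle_from_y b c : distinct3 y b c -> three_cycle y b c \in T.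
Proof.
move=> ybc; case: (boolP (x \in [:: y; b; c])) => [/(three_cycle_at ybc)|].
  by case=> b' [c' [xbc ->]]; apply: three_cycle_from_x.
rewrite !inE !negb_or xy /= => /andP [xb xc].
by apply: three_cycle_from_y_avoiding_x; rewrite 1?eq_sym.
Qed.

Lemma three_cycles_through a b c : distinct3 a b c -> three_cycle a b c \in T.
Proof.
move=> abc.
case: (boolP (x \in [:: a; b; c])) => [/(three_cycle_at abc) [b' [c' [xbc ->]]]|].
  exact: three_cycle_from_x.
case: (boolP (y \in [:: a; b; c])) => [/(three_cycle_at abc) [b' [c' [ybc ->]]] _|].
  exact: three_cycle_from_y.
rewrite !inE !negb_or => /and3P [ya yb yc] /and3P [xa xb xc].
have xya : distinct3 x y a by rewrite /distinct3 xy xa ya.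
have [bx cx by_ cy] : [/\ b != x, c != x, b != y & c != y].
  by rewrite !(eq_sym b) !(eq_sym c); split.
have [ba ca] : b != a /\ c != a by case/and3P: abc; rewrite !(eq_sym a).
have -> : three_cycle a b c = three_cycle y b c ^ three_cycle x y a.
  by rewrite three_cycleJ three_cycle2 // !three_cycle_id.
rewrite groupJ ?Txy // three_cycle_from_y_avoiding_x //.
by rewrite /distinct3 yb yc; case/and3P: abc.
Qed.

End Through.

Lemma Alt_sub_three_cycles : 4 < #|X| ->
  (forall a b c, distinct3 a b c -> three_cycle a b c \in T) -> 'Alt_X \subset T.
Proof.
move=> X_gt4 T3.
pose C := [set s : {perm X} |
  [exists a, exists b, exists c, distinct3 a b c && (s == three_cycle a b c)]].
have CP s : reflect (exists a b c, distinct3 a b c /\ s = three_cycle a b c) (s \in C).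
  rewrite inE; apply: (iffP existsP) => [[a /existsP [b /existsP [c /andP [abc /eqP ->]]]]|].
    by exists a, b, c.
  case=> a [b [c [abc ->]]]; exists a; apply/existsP; exists b; apply/existsP; exists c.
  by rewrite abc /=.
have sCT : <<C>> \subset T.
  by rewrite gen_subG; apply/subsetP => s /CP [a [b [c [abc ->]]]]; apply: T3.
have nCAlt : <<C>> <| 'Alt_X.
  rewrite /normal gen_subG; apply/andP; split.
    by apply/subsetP => s /CP [a [b [c [abc ->]]]]; apply: three_cycle_Alt.
  apply: subset_trans (norm_gen C); apply/subsetP => g _; rewrite inE.
  apply/subsetP => s /imsetP [s' /CP [a [b [c [abc ->]]]] ->].
  by apply/CP; exists (g a), (g b), (g c); rewrite three_cycleJ distinct3_perm.
case/simpleP: (simple_Alt5 X_gt4) => _ /(_ _ nCAlt) [C1|<- //].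
have [a [b [c [_ [ab bc ca]]]]] := card_gt2P (ltnW (ltnW X_gt4)).
have abc : distinct3 a b c by rewrite /distinct3 ab bc eq_sym ca.
have : three_cycle a b c \in <<C>> by apply: mem_gen; apply/CP; exists a, b, c.
by rewrite C1 => /set1gP E; move: (three_cycle_neq1 abc); rewrite E eqxx.
Qed.

Lemma Alt_sub_consecutive_three_cycles (q : nat -> X) : 4 < #|X| ->
  {in gtn #|X| &, injective q} ->
  (forall t, t.+2 < #|X| -> three_cycle (q t) (q t.+1) (q t.+2) \in T) ->
  'Alt_X \subset T.
Proof.
move=> X_gt4 q_inj Tq; apply: Alt_sub_three_cycles => //.
have q_neq i j : i < #|X| -> j < #|X| -> i != j -> q i != q j.
  by move=> hi hj; apply: contra => /eqP /q_inj -> //.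
have dq i j k : i < j -> j < k -> k < #|X| -> distinct3 (q i) (q j) (q k).
  by move=> ij jk kX; rewrite /distinct3 !q_neq //; lia.
have Tq01 i : 2 <= i < #|X| -> three_cycle (q 0) (q 1%N) (q i) \in T.
  elim: i => [|i IH] // /andP [i_ge1 iX]; case: (ltngtP i 2) => [|i_gt2|->]; try lia.
  - move=> ?; have -> : i = 1%N by lia.
    by apply: Tq; lia.
  - have [j ij] : exists j, i = j.+1 by exists i.-1; lia.
    subst i; have -> : three_cycle (q 0) (q 1%N) (q j.+2) =
              three_cycle (q 0) (q 1%N) (q j.+1) ^ three_cycle (q j) (q j.+1) (q j.+2).
      by rewrite three_cycleJ three_cycle2 ?three_cycle_id ?q_neq //; try apply: dq; lia.
    by rewrite groupJ ?IH ?Tq //; lia.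
  - have -> : three_cycle (q 0) (q 1%N) (q 3) =
              three_cycle (q 0) (q 1%N) (q 2) ^ three_cycle (q 2) (q 3) (q 4).
      by rewrite three_cycleJ three_cycle1 ?three_cycle_id ?q_neq //; try apply: dq; lia.
    by rewrite groupJ ?Tq //; lia.
apply: (@three_cycles_through (q 0) (q 1%N)) => [|z /and3P [_ z0 z1]].
  by rewrite q_neq //; lia.
have [i iX Ei] : exists2 i, i < #|X| & q i = z.
  have qX_inj : injective (fun i : 'I_#|X| => q i).
    by move=> i j E; apply/val_inj/q_inj; rewrite ?inE ?ltn_ord.
  by have /codomP [i ->] := inj_card_onto qX_inj (eq_leq (esym (card_ord _))) z; exists i.
subst z; apply: Tq01; case: i iX z0 z1 => [|[|i]] //; by rewrite eqxx.
Qed.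

End ThreeCycleGeneration.

Section ProductGroup.
Variable d : nat -> nat.
Implicit Types (x y g : Pt d) (S H : Pt d -> Prop).

Lemma Pt_ext x y : (forall n, x n = y n) -> x = y.
Proof. exact: functional_extensionality_dep. Qed.

Lemma subgroup1 S : is_subgroup S -> S (P1 d).
Proof. by case. Qed.

Lemma subgroupM S x y : is_subgroup S -> S x -> S y -> S (Pmul x y).
Proof. by case=> _ + _; apply. Qed.

Lemma subgroupV S x : is_subgroup S -> S x -> S (Pinv x).
Proof. by case=> _ _; apply. Qed.

Lemma gen_subgroup S0 : is_subgroup (gen S0).
Proof.
split=> [H [] //|x y gx gy H hH hS0|x gx H hH hS0].
  by apply: subgroupM hH (gx H hH hS0) (gy H hH hS0).
exact: subgroupV hH (gx H hH hS0).
Qed.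

Lemma gen_mem S0 y : S0 y -> gen S0 y.
Proof. by move=> S0y H _; apply. Qed.

Lemma gen_sub S0 H : is_subgroup H -> (forall y, S0 y -> H y) -> forall x, gen S0 x -> H x.
Proof. by move=> hH hS0 x; apply. Qed.

Definition Pconj g x : Pt d := Pmul (Pmul g x) (Pinv g).

Definition ev_eq x y := exists N, forall n, (N <= n)%N -> x n = y n.

Lemma ev_eq_refl x : ev_eq x x.
Proof. by exists 0%N. Qed.

Lemma ev_eq_sym x y : ev_eq x y -> ev_eq y x.
Proof. by case=> N xy; exists N => n /xy. Qed.

Lemma ev_eq_trans x y z : ev_eq x y -> ev_eq y z -> ev_eq x z.
Proof. by case=> N1 xy [N2 yz]; exists (N1 + N2)%N => n hn; rewrite xy ?yz //; lia. Qed.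

Lemma ev_eqM x x' y y' : ev_eq x x' -> ev_eq y y' -> ev_eq (Pmul x y) (Pmul x' y').
Proof.
by case=> N1 xx' [N2 yy']; exists (N1 + N2)%N => n hn; rewrite /Pmul xx' ?yy' //; lia.
Qed.

Lemma ev_eqV x x' : ev_eq x x' -> ev_eq (Pinv x) (Pinv x').
Proof. by case=> N xx'; exists N => n /xx'; rewrite /Pinv => ->. Qed.

End ProductGroup.

Local Open Scope ring_scope.

Lemma eqz_mod_small (m x y : int) :
  (x = y %[mod m])%Z -> `|x - y| < m -> x = y.
Proof.
move/eqP; rewrite eqz_mod_dvd dvdz_eq => /eqP xy_mod lt_xy.
have : ((x - y) %/ m)%Z = 0 by rewrite -xy_mod in lt_xy; nia.
by move=> q0; rewrite q0 mul0r in xy_mod; lia.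
Qed.

Section ModularPoints.
Variable m : nat.
Hypothesis m_gt0 : (0 < m)%N.

Lemma zord_subproof (z : int) : (absz (z %% m)%Z < m)%N.
Proof.
have : 0 <= (z %% m%:Z)%Z by apply: modz_ge0; lia.
have : (z %% m%:Z)%Z < m%:Z by apply: ltz_pmod; lia.
lia.
Qed.

Definition zord (z : int) : 'I_m := Ordinal (zord_subproof z).

Lemma zordE z : (zord z : int) = (z %% m)%Z.
Proof. by rewrite /= gez0_abs //; apply: modz_ge0; lia. Qed.

Lemma zord_eq x y : (zord x = zord y) <-> (x = y %[mod m])%Z.
Proof.
split=> [E|E]; first by rewrite -!zordE E.
by apply: val_inj => /=; rewrite E.
Qed.

Lemma zord_nat (p : 'I_m) : zord p = p.
Proof. by apply: val_inj => /=; rewrite modz_nat modn_small. Qed.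

Lemma zordDml x y : zord ((zord x : nat)%:Z + y) = zord (x + y).
Proof. by apply/zord_eq; rewrite zordE modzDml. Qed.

Lemma zord_inj_small x y : zord x = zord y -> `|x - y| < m -> x = y.
Proof. by move/zord_eq; apply: eqz_mod_small. Qed.

Definition shift (p : 'I_m) (k : int) : 'I_m := zord ((p : nat)%:Z + k).

Lemma shiftA p a b : shift (shift p a) b = shift p (a + b).
Proof. by rewrite /shift zordDml addrA. Qed.

Lemma shift0 p : shift p 0 = p.
Proof. by rewrite /shift addr0 zord_nat. Qed.

Lemma shiftK k : cancel (shift^~ k) (shift^~ (- k)).
Proof. by move=> p; rewrite shiftA subrr shift0. Qed.

Lemma shift_zord x k : shift (zord x) k = zord (x + k).
Proof. exact: zordDml. Qed.

End ModularPoints.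

(* Lamplighter elements act on the blocks [i] with [|i| <= block_radius r]; the radius grows
   with [r] while [4 * block_radius r < r], so that blocks at distance up to twice the radius
   from block [0] are still disjoint. *)
Definition block_radius (r : nat) := (r.-1 %/ 4)%N.

Section Blocks.
Variables (m r : nat).
Hypothesis m_gt0 : (0 < m)%N.

Local Notation M := (block_radius r).

Definition bpt (i : int) (j : 'Z_3) : 'I_m := zord m_gt0 (i + (j : nat)%:Z * r%:Z).

Lemma bpt_val i (j : 'Z_3) : 0 <= i + (j : nat)%:Z * r%:Z < m%:Z ->
  (bpt i j : nat)%:Z = i + (j : nat)%:Z * r%:Z.
Proof. by move=> hij; rewrite zordE modz_small. Qed.

Lemma shift_bpt i j k : shift m_gt0 (bpt i j) k = bpt (i + k) j.
Proof. by rewrite /bpt shift_zord; congr zord; ring. Qed.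

Definition block_of (p : 'I_m) : option (int * 'Z_3) :=
  omap (fun ij : 'I_(2 * M).+1 * 'Z_3 => ((ij.1 : nat)%:Z - M%:Z, ij.2))
    [pick ij : 'I_(2 * M).+1 * 'Z_3 | bpt ((ij.1 : nat)%:Z - M%:Z) ij.2 == p].

Variant block_of_spec (p : 'I_m) : option (int * 'Z_3) -> Prop :=
| BlockIn i j of `|i| <= M%:Z & bpt i j = p : block_of_spec p (Some (i, j))
| BlockOut of (forall i j, `|i| <= M%:Z -> bpt i j != p) : block_of_spec p None.

Lemma block_ofP p : block_of_spec p (block_of p).
Proof.
rewrite /block_of; case: pickP => [[i j] /= /eqP E|H] /=.
  by apply: BlockIn => //; have := ltn_ord i; lia.
apply: BlockOut => i j hi; apply/negP => /eqP E.
have hi' : (absz (i + M%:Z)%R < (2 * M).+1)%N by lia.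
have := H (Ordinal hi', j); rewrite /= -E.
have -> : (absz (i + M%:Z)%R)%:Z - M%:Z = i by lia.
by rewrite eqxx.
Qed.

Definition supported_in (f : int -> 'Z_3) (N : nat) :=
  forall i : int, (N < `|i|)%N -> f i = 0.

(* The permutation of ['I_m] realising [(f, k) : W]: block [i] is rotated by [f (- i)], then
   everything is shifted by [k]. *)
Definition lamp (f : int -> 'Z_3) (k : int) (p : 'I_m) : 'I_m :=
  if block_of p is Some (i, j) then shift m_gt0 (bpt i (j + f (- i))) k
  else shift m_gt0 p k.

Lemma lamp_out f k p : (forall i j, `|i| <= M%:Z -> bpt i j != p) ->
  lamp f k p = shift m_gt0 p k.
Proof. by rewrite /lamp; case: block_ofP => // i j hi <- /(_ i j hi); rewrite eqxx. Qed.

Lemma lamp_shift k p : lamp (fun=> 0) k p = shift m_gt0 p k.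
Proof. by rewrite /lamp; case: block_ofP => [i j _ <-|//]; rewrite addr0. Qed.

Hypotheses (r_gt0 : (0 < r)%N) (r3_le_m : (3 * r <= m)%N).

Lemma Z3_lt (j : 'Z_3) : (j < 3)%N.
Proof. by case: j. Qed.

Lemma bpt_inj i i' j j' : `|i| <= (2 * M)%:Z -> `|i'| <= (2 * M)%:Z ->
  bpt i j = bpt i' j' -> i = i' /\ j = j'.
Proof.
rewrite /bpt /block_radius => hi hi' /zord_inj_small E.
have := Z3_lt j; have := Z3_lt j' => hj' hj.
have {}E := E ltac:(nia).
have ejj : (j : nat) = j' by nia.
split; last exact: val_inj.
by rewrite ejj in E; lia.
Qed.

Lemma block_of_bpt i j : `|i| <= M%:Z -> block_of (bpt i j) = Some (i, j).
Proof.
move=> hi; case: block_ofP => [i' j' hi' E|H]; last by have := H i j hi; rewrite eqxx.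
by have [||-> ->] := bpt_inj _ _ E; try lia.
Qed.

Lemma lamp_bpt f k i j : `|i| <= M%:Z ->
  lamp f k (bpt i j) = bpt (i + k) (j + f (- i)).
Proof. by move=> hi; rewrite /lamp block_of_bpt // shift_bpt. Qed.

Lemma lamp_inj f k : injective (lamp f k).
Proof.
move=> p q; rewrite /lamp.
case: block_ofP => [i j hi Ep|Hp]; case: block_ofP => [i' j' hi' Eq|Hq] /(can_inj (shiftK _ _)) E.
- have [||ii' jj'] := bpt_inj _ _ E; try lia.
  by subst i'; move/addIr: jj' => jj'; rewrite -Ep -Eq jj'.
- by have := Hq i (j + f (- i)) hi; rewrite E eqxx.
- by have := Hp i' (j' + f (- i')) hi'; rewrite -E eqxx.
- exact: E.
Qed.

Lemma lampM f g k l N1 N2 : supported_in f N1 -> supported_in g N2 ->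
  (N1 + N2 + `|k| <= M)%N ->
  lamp (fun i => f i + g (i - k)) (k + l) =1 lamp g l \o lamp f k.
Proof.
move=> sf sg hM p /=.
case: (block_ofP p) => [i j hi <-|Hp].
  rewrite lamp_bpt // [lamp f k _]lamp_bpt //.
  case: (leqP (absz (i + k)%R) M) => hik; first by rewrite lamp_bpt // !addrA opprD.
  rewrite [RHS]lamp_out => [|i' j' hi']; last by apply/eqP => /bpt_inj [||E _]; lia.
  by rewrite shift_bpt (sg (- i - k)) ?addr0 ?addrA //; lia.
rewrite [lamp f k p]lamp_out // lamp_out // [RHS]/lamp; case: block_ofP => [i j hi E|_]; last first.
  by rewrite shiftA.
have Ep : p = bpt (i - k) j by rewrite -(shiftK m_gt0 k p) -E shift_bpt.
have hik : (M < absz (i - k)%R)%N.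
  rewrite ltnNge; apply/negP => hik.
  by have /eqP[] := Hp (i - k) j ltac:(lia); rewrite -Ep.
by rewrite (sg (- i)) ?addr0 ?E ?shiftA //; lia.
Qed.

End Blocks.

Lemma Wt_ext (w w' : Wt) : w.1 =1 w'.1 -> w.2 = w'.2 -> w = w'.
Proof. by case: w w' => f k [g l] /= /funext -> ->. Qed.

Definition Winv (w : Wt) : Wt := (fun i => - w.1 (i + w.2), - w.2).

Lemma WmulV w : Wmul w (Winv w) = W1.
Proof. by apply: Wt_ext => [i|] /=; rewrite ?subrK subrr. Qed.

Lemma in_WM w w' : in_W w -> in_W w' -> in_W (Wmul w w').
Proof.
case: w w' => f k [g l] [N1 /= f_supp] [N2 /= g_supp].
by exists (N1 + N2 + `|k|)%N => i hi /=; rewrite f_supp ?g_supp ?addr0 //; lia.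
Qed.

Lemma in_WV w : in_W w -> in_W (Winv w).
Proof.
case: w => f k [N /= f_supp]; exists (N + `|k|)%N => i hi /=.
by rewrite f_supp ?oppr0 //; lia.
Qed.

Lemma in_W1 : in_W W1.
Proof. by exists 0%N. Qed.

Lemma in_Wa : in_W Wa.
Proof. by exists 0%N. Qed.

Lemma in_Wb0 : in_W Wb0.
Proof. by exists 0%N => i /=; case: eqP => // ->. Qed.

Definition Wlamp (a : int) (c : 'Z_3) : Wt := (fun i => if i == a then c else 0, 0).

Section LamplighterGeneration.
Variable S : Wt -> Prop.
Hypotheses (S1 : S W1) (Sa : S Wa) (SaV : S (Winv Wa)) (Sb0 : S Wb0).
Hypothesis SM : forall x y, S x -> S y -> S (Wmul x y).

Lemma S_shift k : S (fun=> 0, k).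
Proof.
have Sn (n : nat) : S (fun=> 0, n%:Z) /\ S (fun=> 0, - n%:Z).
  elim: n => [|n [Sn SNn]]; first by rewrite oppr0.
  split; [ have -> : (fun=> 0, n.+1%:Z) = Wmul (fun=> 0, n%:Z) Wa
         | have -> : (fun=> 0, - n.+1%:Z) = Wmul (fun=> 0, - n%:Z) (Winv Wa) ];
    do ?[exact: SM];
    by apply: Wt_ext => [i|] /=; rewrite ?oppr0 ?addr0 // -addn1 PoszD ?opprD.
by case: k => n; [case: (Sn n) | case: (Sn n.+1) => _; rewrite NegzE].
Qed.

Lemma S_lamp a c : S (Wlamp a c).
Proof.
have -> : c = (c : nat)%:R by rewrite natr_Zp.
elim: (c : nat) => [|n IH].
  by have -> : Wlamp a 0%:R = W1 by apply: Wt_ext => [i|] //=; case: (i == a).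
have -> : Wlamp a n.+1%:R = Wmul (Wlamp a n%:R) (Wmul (Wmul (fun=> 0, a) Wb0) (fun=> 0, - a)).
  apply: Wt_ext => [i|] /=; rewrite !(addr0, add0r, subr0) ?subrr // subr_eq0 -natr1.
  by case: (i == a); rewrite ?add0r.
apply: SM => //; apply: SM; last exact: S_shift.
by apply: SM; [exact: S_shift | exact: Sb0].
Qed.

Lemma S_fin_supp (s : seq int) g : (forall i, i \notin s -> g i = 0) -> S (g, 0).
Proof.
elim: s g => [|a s IH] g g_supp.
  by have -> : (g, 0) = W1 by apply: Wt_ext => [i|] //=; apply: g_supp.
have -> : (g, 0) = Wmul (fun i => if i == a then 0 else g i, 0) (Wlamp a (g a)).
  apply: Wt_ext => [i|] /=; last by rewrite addr0.
  by rewrite subr0; case: eqP => [->|]; rewrite ?add0r ?addr0.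
apply: SM (S_lamp _ _); apply: IH => i i_s; case: eqP => // /eqP ia.
by apply: g_supp; rewrite in_cons negb_or ia.
Qed.

Lemma in_W_ind w : in_W w -> S w.
Proof.
case: w => f k [N /= f_supp].
have -> : (f, k) = Wmul (f, 0) (fun=> 0, k).
  by apply: Wt_ext => [i|] /=; rewrite ?add0r ?addr0 ?subr0.
apply: SM (S_shift k); apply: (@S_fin_supp [seq i%:Z - N%:Z | i <- iota 0 (2 * N).+1]).
move=> i i_s; apply: f_supp; rewrite ltnNge; apply: contra i_s => iN.
by apply/mapP; exists (absz (i + N%:Z)); rewrite ?mem_iota; lia.
Qed.

End LamplighterGeneration.

Section Lamplighter.
Variables d r : nat -> nat.
Hypothesis d_prime : forall n, prime (d n) /\ (5 <= d n)%N.
Hypothesis r_gt0 : forall n, (0 < r n)%N.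
Hypothesis r_incr : forall m n, (m < n)%N -> (r m < r n)%N.
Hypothesis r3_le_d : forall n, (3 * r n <= d n)%N.

Local Hint Resolve r_gt0 r3_le_d : core.

Lemma d_gt0 n : (0 < d n)%N.
Proof. by case: (d_prime n) => _; apply: leq_trans. Qed.

Local Hint Resolve d_gt0 : core.

Local Notation bptn n := (bpt (r n) (d_gt0 n)).
Local Notation shiftn n := (shift (d_gt0 n)).
Local Notation lampn n := (lamp (r n) (d_gt0 n)).
Local Notation bptn_inj := (bpt_inj (r_gt0 _) (r3_le_d _)).
Local Notation radius n := (block_radius (r n)).
Local Notation Alt n := ('Alt_('I_(d n)))%g.

Lemma r_gt_id n : (n < r n)%N.
Proof. by elim: n => [|n IH]; [exact: r_gt0 | exact: leq_ltn_trans IH (r_incr (ltnSn n))]. Qed.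

Lemma radius_ge K n : (4 * K <= n)%N -> (K <= radius n)%N.
Proof. by have := r_gt_id n; rewrite /block_radius; lia. Qed.

Definition phi (w : Wt) : Pt d := fun n => to_perm (lampn n w.1 w.2).

Lemma phiE w n : phi w n =1 lampn n w.1 w.2.
Proof. exact/to_permE/lamp_inj. Qed.

Lemma phiM w w' : in_W w -> in_W w' -> ev_eq (phi (Wmul w w')) (Pmul (phi w) (phi w')).
Proof.
case: w w' => f k [g l] [N1 /= f_supp] [N2 /= g_supp].
exists (4 * (N1 + N2 + `|k|))%N => n hn; apply/permP => p.
by rewrite permM !phiE (lampM _ _ _ _ f_supp g_supp) //; apply: radius_ge.
Qed.

Lemma phi_ev_inj w w' : in_W w -> in_W w' -> ev_eq (phi w) (phi w') -> w = w'.
Proof.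
case: w w' => f k [g l] [N1 /= f_supp] [N2 /= g_supp] [N fg].
pose n := (N + 4 * (N1 + N2 + `|k| + `|l|).+1)%N.
have hM : (N1 + N2 + `|k| + `|l| < radius n)%N by apply: radius_ge; lia.
have {}fg p : lampn n f k p = lampn n g l p.
  by rewrite -(phiE (f, k)) -(phiE (g, l)) fg // leq_addr.
have kl : k = l.
  have := fg (bptn n (radius n)%:Z 0).
  rewrite !lamp_bpt // f_supp ?g_supp; try lia.
  by case/bptn_inj => //; lia.
subst l; apply: Wt_ext => //= i; case: (leqP (absz i) (radius n)) => hi; last first.
  by rewrite f_supp ?g_supp //; lia.
have := fg (bptn n (- i) 0); rewrite !lamp_bpt ?opprK //; try lia.
by case/bptn_inj => //; try lia; move=> _ /addrI.
Qed.

Lemma phi1 : phi W1 = P1 d.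
Proof.
by apply: Pt_ext => n; apply/permP => p; rewrite phiE perm1 /= lamp_shift; exact: shift0.
Qed.

Lemma phiV w : in_W w -> ev_eq (Pinv (phi w)) (phi (Winv w)).
Proof.
move=> w_W; have [N phiwV] := phiM w_W (in_WV w_W).
exists N => n /phiwV; rewrite WmulV phi1 /Pmul /Pinv /P1 => E.
by apply/eqP; rewrite eq_invg_mul -E.
Qed.

Lemma alpha_exp n t p : (alpha d n ^+ t)%g p = shiftn n p t%:Z.
Proof.
rewrite permX (eq_iter (f' := @ordS _)) => [|q]; last by rewrite /alpha /cycle_perm permE.
apply/ord_inj/eqP; rewrite -eqz_nat zordE iter_ordS.
by rewrite -PoszD modz_nat.
Qed.

Lemma phi_a : phi Wa = alpha d.
Proof.
apply: Pt_ext => n; apply/permP => p.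
by rewrite phiE lamp_shift // -[alpha d n]expg1 alpha_exp.
Qed.

Lemma bpt0_eq n (j j' : 'Z_3) : (bptn n 0 j == bptn n 0 j') = (j == j').
Proof. by apply/eqP/eqP => [/bptn_inj [] //|->]. Qed.

Lemma distinct3_bpt0 n : distinct3 (bptn n 0 0) (bptn n 0 1) (bptn n 0 2).
Proof. by rewrite /distinct3 !bpt0_eq. Qed.

Lemma beta_cycle n : beta d r n = three_cycle (bptn n 0 0) (bptn n 0 1) (bptn n 0 2).
Proof.
have := r3_le_d n; have := r_gt0 n => r_gt0n r3n.
rewrite /beta /cyc3; case: insubP => [a _ Ea|/negP[]]; last exact: d_gt0.
case: insubP => [b _ Eb|/negP[]]; last lia.
case: insubP => [c _ Ec|/negP[]]; last lia.
congr three_cycle; apply/val_inj/eqP; rewrite -eqz_nat ?Ea ?Eb ?Ec bpt_val;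
  by rewrite /Zp_trunc /= ?modn_small //; lia.
Qed.

Lemma phi_b0 : phi Wb0 = beta d r.
Proof.
apply: Pt_ext => n; apply/permP => p.
rewrite phiE beta_cycle three_cycleE ?distinct3_bpt0 // /lamp /=.
case: block_ofP => [i j hi <-|p_out]; rewrite shift0; last first.
  have p_neq j : (p == bptn n 0 j) = false by rewrite eq_sym; apply/negbTE/p_out.
  by rewrite !p_neq.
have [->|i0] := eqVneq i 0.
  by rewrite oppr0 eqxx !bpt0_eq; case: j => [[|[|[|]]] ?] //; congr bpt; apply: val_inj.
have neq0 j' : (bptn n i j == bptn n 0 j') = false.
  by apply/eqP => /bptn_inj [] //; lia.
by rewrite oppr_eq0 (negbTE i0) addr0 !neq0.
Qed.

Lemma alpha_Alt n : alpha d n \in Alt n.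
Proof.
have alpha_d : (alpha d n ^+ d n)%g = 1%g.
  apply/permP => p; rewrite alpha_exp perm1 /shift -[RHS]zord_nat; apply/zord_eq.
  by rewrite -PoszD !modz_nat modnDr.
have d_odd : odd (d n).
  by case: (d_prime n) => /even_prime [->|] //.
rewrite Alt_even; apply/negP => odd_alpha.
by move/(congr1 (@odd_perm _)): alpha_d; rewrite odd_permX d_odd odd_alpha odd_perm1.
Qed.

Lemma beta_Alt n : beta d r n \in Alt n.
Proof. by rewrite beta_cycle three_cycle_Alt ?distinct3_bpt0. Qed.

Lemma betaJ_alpha n t :
  (beta d r n ^ (alpha d n ^+ t))%g = three_cycle (bptn n t 0) (bptn n t 1) (bptn n t 2).
Proof. by rewrite beta_cycle three_cycleJ !alpha_exp !shift_bpt add0r. Qed.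

(* As [d n] is prime, [t |-> t * r n] enumerates the points, and the conjugates of beta by
   powers of alpha are the consecutive 3-cycles of this enumeration. *)
Lemma Alt_sub_alpha_beta n : (Alt n \subset <<[set alpha d n; beta d r n]>>)%g.
Proof.
have [d_pr d_ge5] := d_prime n; have := r3_le_d n; have := r_gt0 n => r_gt0n r3n.
pose q t := zord (d_gt0 n) (t * r n)%N%:Z.
apply: (@Alt_sub_consecutive_three_cycles _ _ q); rewrite card_ord //.
  move=> t t' ht ht' /zord_eq; rewrite !modz_nat => /eqP; rewrite eqz_nat => /eqP.
  apply: mul_coprime_mod_inj => //; rewrite coprime_sym prime_coprime //.
  by apply: contraL r3n => /(dvdn_leq r_gt0n); lia.
move=> t _.
have -> : three_cycle (q t) (q t.+1) (q t.+2) = (beta d r n ^ (alpha d n ^+ (t * r n)))%g.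
  rewrite betaJ_alpha; congr three_cycle; apply/zord_eq; congr (_ %% _)%Z;
  by rewrite /Zp_trunc /= ?modn_small //; lia.
by rewrite groupJ ?groupX ?mem_gen // !inE eqxx ?orbT.
Qed.

Local Notation G := (Ggen d r).
Local Notation L := (Linf d r).

Lemma G_subgroup : is_subgroup G.
Proof. exact: gen_subgroup. Qed.

Lemma L_subgroup : is_subgroup L.
Proof. exact: gen_subgroup. Qed.

Lemma G_alpha : G (alpha d).
Proof. by apply: gen_mem; left. Qed.

Lemma G_beta : G (beta d r).
Proof. by apply: gen_mem; right. Qed.

Lemma L_sub_G x : L x -> G x.
Proof.
apply: gen_sub G_subgroup _ x => _ [g [Gg ->]].
by apply: subgroupM G_subgroup (subgroupM G_subgroup Gg G_beta) (subgroupV G_subgroup Gg).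
Qed.

Lemma L_beta : L (beta d r).
Proof.
apply: gen_mem; exists (P1 d); split; first exact: subgroup1 G_subgroup.
by apply: Pt_ext => n; rewrite /Pmul /Pinv /P1 mul1g invg1 mulg1.
Qed.

Lemma L_conj g x : G g -> L x -> L (Pconj g x).
Proof.
move=> Gg; apply: (@gen_sub d _ (L \o Pconj g)) x => [|_ [h [Gh ->]]]; last first.
  apply: gen_mem; exists (Pmul g h); split; first exact: subgroupM G_subgroup Gg Gh.
  by apply: Pt_ext => n; rewrite /Pconj /Pmul /Pinv invMg !mulgA.
split=> [|x y Lx Ly|x Lx] /=.
- have -> : Pconj g (P1 d) = P1 d.
    by apply: Pt_ext => n; rewrite /Pconj /Pmul /Pinv /P1 mulg1 mulgV.
  exact: subgroup1 L_subgroup.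
- have -> : Pconj g (Pmul x y) = Pmul (Pconj g x) (Pconj g y).
    by apply: Pt_ext => n; rewrite /Pconj /Pmul /Pinv !mulgA mulgKV.
  exact: subgroupM L_subgroup Lx Ly.
- have -> : Pconj g (Pinv x) = Pinv (Pconj g x).
    by apply: Pt_ext => n; rewrite /Pconj /Pmul /Pinv !invMg invgK mulgA.
  exact: subgroupV L_subgroup Lx.
Qed.

Lemma G_Alt x : G x -> forall n, x n \in Alt n.
Proof.
apply: (@gen_sub d _ (fun x : Pt d => forall n, x n \in Alt n)) x => [|_ [->|->] n].
- split=> [n|x y Ax Ay n|x Ax n]; first exact: group1.
    exact: groupM (Ax n) (Ay n).
  by rewrite /Pinv groupV Ax.
- exact: alpha_Alt.
- exact: beta_Alt.
Qed.

Definition betaJ (t : nat) : Pt d := iter t (Pconj (Pinv (alpha d))) (beta d r).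

Lemma L_betaJ t : L (betaJ t).
Proof.
elim: t => [|t IH] /=; first exact: L_beta.
by apply: L_conj IH; apply: subgroupV G_subgroup G_alpha.
Qed.

Lemma betaJE t n : betaJ t n = (beta d r n ^ (alpha d n ^+ t))%g.
Proof.
elim: t => [|t IH]; first by rewrite /= expg0 conjg1.
by rewrite /betaJ iterS -/(betaJ t) /Pconj /Pmul /Pinv IH invgK -mulgA -conjgE -conjgM -expgSr.
Qed.

(* The supports [{0, r m, 2 r m}] and [{r n, r n + r m, r n + 2 r m}] are disjoint, as
   [0 < r n < r m] and [r n + 2 r m < 3 r m <= d m]. *)
Lemma beta_betaJ_commute n m : (n < m)%N -> commute (beta d r m) (betaJ (r n) m).
Proof.
move=> nm; have := r_incr nm; have := r_gt0 n; have := r3_le_d m => r3m rn_gt0 rnm.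
have d0 := distinct3_bpt0 m.
have dJ := distinct3_perm (alpha d m ^+ r n)%g d0; rewrite !alpha_exp !shift_bpt add0r in dJ.
rewrite betaJE betaJ_alpha beta_cycle.
apply: perm_onC (three_cycle_on d0) (three_cycle_on dJ) _.
rewrite disjoint_subset; apply/subsetP => p; rewrite !inE => /orP [/orP [] |] /eqP ->;
by rewrite -!(inj_eq (@ord_inj _)) -!eqz_nat !bpt_val /Zp_trunc /= ?modn_small //; lia.
Qed.

Lemma beta_betaJ_not_commute n : ~ commute (beta d r n) (betaJ (r n) n).
Proof.
have [d_pr d_ge5] := d_prime n; have := r3_le_d n; have := r_gt0 n => rn_gt0 r3n.
have r3_neq_d : (3 * r n != d n)%N.
  apply/negP => /eqP d3; move: d_pr; rewrite -d3 => /primeP [_ /(_ 3%N)].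
  by rewrite dvdn_mulr // => /(_ isT) /orP [] /eqP; lia.
have [e0 e1] : bptn n (r n) 0 = bptn n 0 1 /\ bptn n (r n) 1 = bptn n 0 2.
  by split; apply/zord_eq; congr (_ %% _)%Z; rewrite /Zp_trunc /= ?modn_small //; lia.
have [b1e b2e b0e] : [/\ bptn n 0 1 != bptn n (r n) 2, bptn n 0 2 != bptn n (r n) 2
                       & bptn n 0 0 != bptn n (r n) 2].
  by split; rewrite -(inj_eq (@ord_inj _)) -eqz_nat !bpt_val /Zp_trunc /= ?modn_small //; lia.
have b12e : distinct3 (bptn n 0 1) (bptn n 0 2) (bptn n (r n) 2) by rewrite /distinct3 bpt0_eq b1e.
rewrite betaJE betaJ_alpha beta_cycle e0 e1 => /(congr1 (fun s : {perm _} => s (bptn n 0 0))) /=.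
have Jb0 : three_cycle (bptn n 0 1) (bptn n 0 2) (bptn n (r n) 2) (bptn n 0 0) = bptn n 0 0.
  by rewrite three_cycle_id ?bpt0_eq.
rewrite [LHS]permM [RHS]permM Jb0 three_cycle1 ?distinct3_bpt0 // three_cycle1 //.
by move=> /eqP; rewrite bpt0_eq.
Qed.

Definition L_at n (s : {perm 'I_(d n)}) :=
  exists2 x : Pt d, L x & x n = s /\ forall m, m != n -> x m = 1%g.

Lemma L_of_coords k : (forall m, (m < k)%N -> forall s, s \in Alt m -> L_at s) ->
  forall y : Pt d, (forall m, y m \in Alt m) -> (forall m, (k <= m)%N -> y m = 1%g) -> L y.
Proof.
elim: k => [|k IH] L_lt y yA y1.
  have -> : y = P1 d by apply: Pt_ext => m; apply: y1.
  exact: subgroup1 L_subgroup.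
have [x Lx [xk x1]] := L_lt k (ltnSn k) (y k) (yA k).
pose y' : Pt d := fun m => if (m < k)%N then y m else 1%g.
have -> : y = Pmul y' x.
  apply: Pt_ext => m; rewrite /Pmul /y'; case: (ltngtP m k) => [mk|km|->].
  - by rewrite x1 ?mulg1 // neq_ltn mk.
  - by rewrite y1 // x1 ?mulg1 // neq_ltn km orbT.
  - by rewrite xk mul1g.
apply: subgroupM L_subgroup _ Lx; apply: IH => [m mk|m|m km].
- by apply: L_lt; apply: ltnW.
- by rewrite /y'; case: ifP => // _; apply: group1.
- by rewrite /y' ltnNge km.
Qed.

Definition L_coord n : {set {perm 'I_(d n)}} := [set s | `[< L_at s >]].

Lemma L_coordP n s : reflect (L_at s) (s \in L_coord n).
Proof. by rewrite inE; apply: asboolP. Qed.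

Lemma L_coord_group n : group_set (L_coord n).
Proof.
apply/group_setP; split.
  by apply/L_coordP; exists (P1 d); [exact: subgroup1 L_subgroup | split].
move=> s t /L_coordP [x Lx [xn x1]] /L_coordP [y Ly [yn y1]].
apply/L_coordP; exists (Pmul x y); first exact: subgroupM L_subgroup Lx Ly.
by split=> [|m mn]; rewrite /Pmul ?xn ?yn // x1 ?y1 ?mulg1.
Qed.

Lemma Alt_norm_L_coord n : (Alt n \subset 'N(L_coord n))%g.
Proof.
apply: subset_trans (Alt_sub_alpha_beta n) _; rewrite gen_subG.
have norm g : G g -> g n \in 'N(L_coord n)%g.
  move=> Gg; rewrite inE; apply/subsetP => _ /imsetP [s /L_coordP [x Lx [xn x1]] ->].
  apply/L_coordP; exists (Pconj (Pinv g) x); first exact: L_conj (subgroupV G_subgroup Gg) Lx.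
  split=> [|m mn]; rewrite /Pconj /Pmul /Pinv invgK ?xn ?conjgE ?mulgA //.
  by rewrite x1 // mulg1 mulVg.
by apply/subsetP => _ /set2P [] ->; apply: norm; [exact: G_alpha | exact: G_beta].
Qed.

Lemma L_at_Alt n s : s \in Alt n -> L_at s.
Proof.
elim/ltn_ind: n s => n IH s sA.
pose c : Pt d := fun m => [~ beta d r m, betaJ (r n) m]%g.
have Lc : L c.
  have -> : c = Pmul (Pmul (Pmul (Pinv (beta d r)) (Pinv (betaJ (r n)))) (beta d r)) (betaJ (r n)).
    by apply: Pt_ext => m; rewrite /c /Pmul /Pinv /commg /conjg !mulgA.
  apply: subgroupM L_subgroup _ (L_betaJ _); apply: subgroupM L_subgroup _ L_beta.
  exact: subgroupM L_subgroup (subgroupV L_subgroup L_beta) (subgroupV L_subgroup (L_betaJ _)).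
have cA m : c m \in Alt m.
  by rewrite groupR ?beta_Alt // betaJE groupJ ?groupX ?alpha_Alt ?beta_Alt.
pose y : Pt d := fun m => if (m < n)%N then c m else 1%g.
have Ly : L y.
  apply: (L_of_coords IH) => [m|m mn]; rewrite /y; first by case: ifP => // _; apply: group1.
  by rewrite ltnNge mn.
have cn_L : c n \in L_coord n.
  apply/L_coordP; exists (Pmul (Pinv y) c).
    exact: subgroupM L_subgroup (subgroupV L_subgroup Ly) Lc.
  split=> [|m mn]; rewrite /Pmul /Pinv /y ?ltnn ?invg1 ?mul1g //.
  case: ltngtP mn => [_ _|nm _|->]; rewrite ?mulVg ?eqxx //.
  by rewrite invg1 mul1g; apply/eqP/commgP/beta_betaJ_commute.
pose K := (Group (L_coord_group n) :&: 'Alt_('I_(d n)))%G.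
have nK : (K <| Alt n)%g.
  by rewrite /normal subsetIr normsI ?normG // Alt_norm_L_coord.
have d_ge5 : (5 <= #|'I_(d n)|)%N by rewrite card_ord; case: (d_prime n).
case/simpleP: (simple_Alt5 d_ge5) => _ /(_ K nK) [K1|KA]; last first.
  by move: sA; rewrite -KA inE => /andP [/L_coordP].
have : c n \in K by rewrite inE cn_L cA.
by rewrite K1 => /set1gP /eqP /commgP /beta_betaJ_not_commute.
Qed.

Lemma dsumAlt_L x : in_dsumAlt x -> L x.
Proof. by case=> xA [N xN]; apply: (L_of_coords (k := N)) => // m _ s; apply: L_at_Alt. Qed.

Definition tau (x : Pt d) : Wt :=
  epsilon (inhabits W1) (fun w => in_W w /\ ev_eq x (phi w)).

Lemma G_ev_phi x : G x -> exists w, in_W w /\ ev_eq x (phi w).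
Proof.
apply: (@gen_sub d _ (fun x => exists w, in_W w /\ ev_eq x (phi w))) x => [|_ [->|->]].
- split=> [|x y [w [w_W xw]] [w' [w'_W yw']]|x [w [w_W xw]]].
  + by exists W1; rewrite phi1; split; [exact: in_W1 | exact: ev_eq_refl].
  + exists (Wmul w w'); split; first exact: in_WM.
    exact: ev_eq_trans (ev_eqM xw yw') (ev_eq_sym (phiM w_W w'_W)).
  + exists (Winv w); split; first exact: in_WV.
    exact: ev_eq_trans (ev_eqV xw) (phiV w_W).
- by exists Wa; rewrite phi_a; split; [exact: in_Wa | exact: ev_eq_refl].
- by exists Wb0; rewrite phi_b0; split; [exact: in_Wb0 | exact: ev_eq_refl].
Qed.

Lemma tau_spec x : G x -> in_W (tau x) /\ ev_eq x (phi (tau x)).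
Proof. by move/G_ev_phi; apply: epsilon_spec. Qed.

Lemma tau_eq x w : G x -> in_W w -> ev_eq x (phi w) -> tau x = w.
Proof.
move=> Gx w_W xw; have [tau_W x_tau] := tau_spec Gx.
exact: phi_ev_inj tau_W w_W (ev_eq_trans (ev_eq_sym x_tau) xw).
Qed.

Lemma tauM x y : G x -> G y -> tau (Pmul x y) = Wmul (tau x) (tau y).
Proof.
move=> Gx Gy; have [x_W xt] := tau_spec Gx; have [y_W yt] := tau_spec Gy.
apply: tau_eq; [exact: subgroupM G_subgroup Gx Gy | exact: in_WM |].
exact: ev_eq_trans (ev_eqM xt yt) (ev_eq_sym (phiM x_W y_W)).
Qed.

Lemma tau_in_W x : G x -> in_W (tau x).
Proof. by case/tau_spec. Qed.

Lemma tau_alpha : tau (alpha d) = Wa.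
Proof. by apply: tau_eq G_alpha in_Wa _; rewrite phi_a; exact: ev_eq_refl. Qed.

Lemma tau_beta : tau (beta d r) = Wb0.
Proof. by apply: tau_eq G_beta in_Wb0 _; rewrite phi_b0; exact: ev_eq_refl. Qed.

Lemma tau_onto w : in_W w -> exists2 x, G x & tau x = w.
Proof.
pose S w := in_W w /\ exists x, G x /\ ev_eq x (phi w).
suff /(_ w) Sw : forall w, in_W w -> S w.
  by move=> /[dup] w_W /Sw [_ [x [Gx xw]]]; exists x => //; apply: tau_eq.
apply: in_W_ind => [||||u v [u_W [x [Gx xu]]] [v_W [y [Gy yv]]]].
- split; first exact: in_W1.
  by exists (P1 d); rewrite phi1; split; [exact: subgroup1 G_subgroup | exact: ev_eq_refl].
- split; first exact: in_Wa.
  by exists (alpha d); rewrite phi_a; split; [exact: G_alpha | exact: ev_eq_refl].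
- split; first exact: in_WV in_Wa.
  exists (Pinv (alpha d)); split; first exact: subgroupV G_subgroup G_alpha.
  by rewrite -{1}phi_a; apply: phiV in_Wa.
- split; first exact: in_Wb0.
  by exists (beta d r); rewrite phi_b0; split; [exact: G_beta | exact: ev_eq_refl].
- split; first exact: in_WM.
  exists (Pmul x y); split; first exact: subgroupM G_subgroup Gx Gy.
  exact: ev_eq_trans (ev_eqM xu yv) (ev_eq_sym (phiM u_W v_W)).
Qed.

Lemma ker_tau x : (G x /\ tau x = W1) <-> in_dsumAlt x.
Proof.
split=> [[Gx tx]|xA].
  split; first exact: G_Alt.
  by have [_] := tau_spec Gx; rewrite tx phi1 => -[N xN]; exists N.
have Gx := L_sub_G (dsumAlt_L xA); split=> //.
by apply: tau_eq in_W1 _ => //; rewrite phi1; case: xA => _ [N xN]; exists N.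
Qed.

End Lamplighter.

Local Close Scope ring_scope.

Theorem proposition3p5 (d r : nat -> nat)
  (d_mono : forall m n, m <= n -> d m <= d n)
  (d_prime : forall n, prime (d n) /\ 5 <= d n)
  (r_pos : forall n, 0 < r n)
  (r_incr : forall m n, m < n -> r m < r n)
  (dr : forall n, 3 * r n <= d n) :
  exists tau : Pt d -> Wt,
    [/\ (forall x y, Ggen d r x -> Ggen d r y ->
           tau (Pmul x y) = Wmul (tau x) (tau y)),
        (forall x, Ggen d r x -> in_W (tau x)),
        (forall w, in_W w -> exists2 x, Ggen d r x & tau x = w),
        tau (alpha d) = Wa /\ tau (beta d r) = Wb0 &
        (forall x, (Ggen d r x /\ tau x = W1) <-> in_dsumAlt x) /\
        (forall x, in_dsumAlt x -> Linf d r x)].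
Proof.
exists (tau r d_prime); split.
- exact: tauM.
- exact: tau_in_W.
- exact: tau_onto.
- by split; [exact: tau_alpha | exact: tau_beta].
- by split; [exact: ker_tau | exact: dsumAlt_L].
Qed.
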